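(* Let $\sigma$ be a signature, $\Delta$ a set of $\mathcal{CO}[\sigma]$-formulas, and $\varphi,\psi$ arbitrary formulas over $\sigma$ (of $\mathcal{CO}_{\sqcup}[\sigma]$ or $\mathcal{COD}[\sigma]$). If $\Delta\models^g\varphi\sqcup\psi$, then $\Delta\models^g\varphi$ or $\Delta\models^g\psi$. In particular, if $\models^g\varphi\sqcup\psi$, then $\models^g\varphi$ or $\models^g\psi$.
   Context: A signature $\sigma=(\mathrm{Dom},\mathrm{Ran})$: $\mathrm{Dom}$ nonempty finite set of variables, each with nonempty finite range $\mathrm{Ran}(X)$; $\mathbf X=\mathbf x$ abbreviates $X_1=x_1\wedge\dots\wedge X_n=x_n$ ($\mathbf x\in\prod\mathrm{Ran}(X_i)$), inconsistent if it contains $X=x,X=x'$ with $x\ne x'$. Languages: $\mathcal{CO}[\sigma]$: $\alpha::=X=x\mid\neg\alpha\mid\alpha\wedge\alpha\mid\alpha\vee\alpha\mid\mathbf X=\mathbf x\;\Box\!\!\rightarrow\alpha$; $\mathcal{CO}_{\sqcup}[\sigma]$: $\varphi::=X=x\mid\neg\alpha\mid\varphi\wedge\varphi\mid\varphi\vee\varphi\mid\varphi\sqcup\varphi\mid\mathbf X=\mathbf x\;\Box\!\!\rightarrow\varphi$; $\mathcal{COD}[\sigma]$: $\varphi::=X=x\mid{=}(\mathbf X;Y)\mid\neg\alpha\mid\varphi\wedge\varphi\mid\varphi\vee\varphi\mid\mathbf X=\mathbf x\;\Box\!\!\rightarrow\varphi$ ($\alpha\in\mathcal{CO}[\sigma]$).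 Systems of functions $\mathcal F$: for each $V\in\mathrm{En}(\mathcal F)\subseteq\mathrm{Dom}$ parents $PA^{\mathcal F}_V\subseteq\mathrm{Dom}\setminus\{V\}$ and $\mathcal F_V:\mathrm{Ran}(PA^{\mathcal F}_V)\to\mathrm{Ran}(V)$; $\mathrm{Ex}(\mathcal F)=\mathrm{Dom}\setminus\mathrm{En}(\mathcal F)$; only recursive systems (acyclic parent graph), forming $\mathbb F_\sigma$. An assignment $s$ ($s(X)\in\mathrm{Ran}(X)$) is compatible with $\mathcal F$ if $s(V)=\mathcal F_V(s(PA^{\mathcal F}_V))$ for $V\in\mathrm{En}(\mathcal F)$. A generalized causal team over $\sigma$ is a set $T$ of compatible pairs $(s,\mathcal F)$ with $\mathcal F\in\mathbb F_\sigma$; $T^-=\{s:(s,\mathcal F)\in T\}$. For consistent $\mathbf X=\mathbf x$: $\mathcal F_{\mathbf X=\mathbf x}$ restricts $\mathcal F$ to $\mathrm{En}(\mathcal F)\setminus\mathbf X$; $s^{\mathcal F}_{\mathbf X=\mathbf x}$: $X_i\mapsto x_i$, $V\mapsto s(V)$ on $\mathrm{Ex}(\mathcal F)\setminus\mathbf X$, $V\mapsto\mathcal F_V(s^{\mathcal F}_{\mathbf X=\mathbf x}(PA^{\mathcal F}_V))$ on $\mathrm{En}(\mathcal F)\setminus\mathbf X$; $T_{\mathbf X=\mathbf x}=\{(s^{\mathcal F}_{\mathbf X=\mathbf x},\mathcal F_{\mathbf X=\mathbf x}):(s,\mathcal F)\in T\}$. $\models^g$: $T\models X=x$ iff $s(X)=x$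 for all $s\in T^-$; $T\models{=}(\mathbf X;Y)$ iff for all $s,s'\in T^-$, $s(\mathbf X)=s'(\mathbf X)$ implies $s(Y)=s'(Y)$; $T\models\neg\alpha$ iff $\{(s,\mathcal F)\}\not\models\alpha$ for all $(s,\mathcal F)\in T$; $\wedge$ classical; $T\models\varphi\vee\psi$ iff $T=T_1\cup T_2$ with $T_1\models\varphi$, $T_2\models\psi$; $T\models\varphi\sqcup\psi$ iff $T\models\varphi$ or $T\models\psi$; $T\models\mathbf X=\mathbf x\;\Box\!\!\rightarrow\varphi$ iff $\mathbf X=\mathbf x$ inconsistent or $T_{\mathbf X=\mathbf x}\models\varphi$. $\Delta\models^g\varphi$: every generalized causal team over $\sigma$ satisfying all of $\Delta$ satisfies $\varphi$. *)

From mathcomp Require Import all_boot.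
Set Implicit Arguments.
Unset Strict Implicit.
Unset Printing Implicit Defensive.

(* Dom = the finite type [var S] (nonempty); Ran X = the finite type [ran X] (nonempty). *)
Record signature := Signature {
  var : finType;
  ran : var -> finType;
  var_ne : 0 < #|var|;
  ran_ne : forall X : var, 0 < #|ran X|
}.

Section Defs.
Variable S : signature.

(* An (atomic) intervention/conjunction  X1 = x1 /\ ... /\ Xn = xn  *)
Definition conj_eq := seq {X : var S & ran X}.

Definition consistent (l : conj_eq) : Prop :=
  forall u v, u \in l -> v \in l -> tag u = tag v -> u = v.

Inductive co : Type :=
| CEq  : forall X : var S, ran X -> co
| CNeg : co -> co
| CAnd : co -> co -> co
| COr  : co -> co -> co
| CCf  : conj_eq -> co -> co.

(* Common syntax of CO_sqcup[sigma] and COD[sigma]: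
   atoms, dependence atoms, negation of CO-formulas, /\, \/, sqcup, counterfactual. *)
Inductive form : Type :=
| FEq  : forall X : var S, ran X -> form
| FDep : seq (var S) -> var S -> form
| FNeg : co -> form
| FAnd : form -> form -> form
| FOr  : form -> form -> form
| FTor : form -> form -> form
| FCf  : conj_eq -> form -> form.

Fixpoint inCOt (f : form) : Prop :=
  match f with
  | FEq _ _ | FNeg _ => True
  | FDep _ _ => False
  | FAnd a b | FOr a b | FTor a b => inCOt a /\ inCOt b
  | FCf _ a => inCOt a
  end.

Fixpoint inCOD (f : form) : Prop :=
  match f with
  | FEq _ _ | FNeg _ | FDep _ _ => True
  | FTor _ _ => False
  | FAnd a b | FOr a b => inCOD a /\ inCOD b
  | FCf _ a => inCOD a
  end.

Definition assign := forall X : var S, ran X.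

(* F_V is given as a function of the whole assignment; [recursive] requires it
   to depend only on the values of the parents PA_V, i.e. F_V : Ran(PA_V) -> Ran(V). *)
Record system := System {
  En : {set var S};
  PA : var S -> {set var S};
  fval : forall V : var S, assign -> ran V
}.

Definition Ex (F : system) : {set var S} := ~: En F.

Definition pedge (F : system) : rel (var S) :=
  fun X V => (V \in En F) && (X \in PA F V).

Definition recursive (F : system) : Prop :=
  [/\ forall V, V \in En F -> V \notin PA F V,
      forall V, V \in En F -> forall s t : assign,
          (forall X, X \in PA F V -> s X = t X) -> fval F V s = fval F V t
    & forall X V, pedge F X V -> ~~ connect (pedge F) V X].

Definition compatible (s : assign) (F : system) : Prop :=
  forall V, V \in En F -> s V = fval F V s.

Definition team := assign * system -> Prop.

Definition gteam (T : team) : Prop :=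
  forall p, T p -> recursive p.2 /\ compatible p.1 p.2.

Definition single (p : assign * system) : team := fun q => q = p.

Definition team_union (T T1 T2 : team) : Prop :=
  forall p, T p <-> (T1 p \/ T2 p).

Definition lookup (l : conj_eq) (V : var S) : option (ran V) :=
  foldr (fun u acc => @untag _ (@ran S) _ acc V (fun y : ran V => Some y) u) None l.

Definition ivars (l : conj_eq) : {set var S} :=
  [set V | has (fun u => tag u == V) l].

Definition sys_int (l : conj_eq) (F : system) : system :=
  System (En F :\: ivars l) (PA F) (fval F).

Definition istep (l : conj_eq) (F : system) (s t : assign) : assign :=
  fun V => match lookup l V with
           | Some x => x
           | None => if V \in En F then fval F V t else s V
           end.

(* s^F_{X=x}: the recursive definition, computed by |Dom| rounds of
   recomputation (enough, since the parent graph is acyclic) *)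
Definition ass_int (l : conj_eq) (F : system) (s : assign) : assign :=
  iter #|var S| (istep l F s) s.

Definition team_int (l : conj_eq) (T : team) : team :=
  fun q => exists s F, T (s, F) /\ q = (ass_int l F s, sys_int l F).

Fixpoint sat_co (a : co) (T : team) {struct a} : Prop :=
  match a with
  | CEq X x => forall p, T p -> p.1 X = x
  | CNeg b => forall p, T p -> ~ sat_co b (single p)
  | CAnd b c => sat_co b T /\ sat_co c T
  | COr b c => exists T1 T2, team_union T T1 T2 /\ sat_co b T1 /\ sat_co c T2
  | CCf l b => ~ consistent l \/ sat_co b (team_int l T)
  end.

Fixpoint sat (f : form) (T : team) {struct f} : Prop :=
  match f with
  | FEq X x => forall p, T p -> p.1 X = x
  | FDep Xs Y => forall p q, T p -> T q ->
        (forall X, X \in Xs -> p.1 X = q.1 X) -> p.1 Y = q.1 Y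
  | FNeg b => forall p, T p -> ~ sat_co b (single p)
  | FAnd b c => sat b T /\ sat c T
  | FOr b c => exists T1 T2, team_union T T1 T2 /\ sat b T1 /\ sat c T2
  | FTor b c => sat b T \/ sat c T
  | FCf l b => ~ consistent l \/ sat b (team_int l T)
  end.

Definition gentails (D : co -> Prop) (f : form) : Prop :=
  forall T, gteam T -> (forall a, D a -> sat_co a T) -> sat f T.

End Defs.

(* Every formula of the common syntax (dependence atoms and [sqcup] included)
   is downward closed, while CO-formulas are flat, hence closed under unions.
   If neither phi nor psi were entailed by Delta, the union of two
   counterexample teams would still satisfy Delta, hence phi or psi, and by
   downward closure one of the two counterexamples would satisfy it. *)

From mathcomp Require Import all_boot.
From Stdlib Require Import Classical.

Set Implicit Arguments.
Unset Strict Implicit.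
Unset Printing Implicit Defensive.

Section TeamClosure.
Variable S : signature.
Implicit Types (T U : team S) (f : form S) (a : co S).

Definition subteam U T := forall p, U p -> T p.

Fixpoint form_of_co a : form S :=
  match a with
  | CEq X x => FEq x
  | CNeg b => FNeg b
  | CAnd b c => FAnd (form_of_co b) (form_of_co c)
  | COr b c => FOr (form_of_co b) (form_of_co c)
  | CCf l b => FCf l (form_of_co b)
  end.

Lemma sat_form_of_co a T : sat (form_of_co a) T <-> sat_co a T.
Proof.
elim: a T => [X x|b _|b IHb c IHc|b IHb c IHc|l b IH] T //=.
- by rewrite IHb IHc.
- by split=> -[T1 [T2 [U [H1 H2]]]]; exists T1, T2; rewrite IHb IHc in H1 H2 *.
- by rewrite IH.
Qed.

Lemma team_int_sub l U T : subteam U T -> subteam (team_int l U) (team_int l T).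
Proof. by move=> UT q [s [F [Us ->]]]; exists s, F; split=> //; apply: UT. Qed.

Lemma sat_sub f T U : subteam U T -> sat f T -> sat f U.
Proof.
elim: f T U => [X x|Xs Y|b|b IHb c IHc|b IHb c IHc|b IHb c IHc|l b IH] T U UT /=.
- by move=> H p /UT; apply: H.
- by move=> H p q /UT Tp /UT Tq; apply: H.
- by move=> H p /UT; apply: H.
- by case=> Hb Hc; split; [apply: IHb Hb|apply: IHc Hc].
- move=> [T1 [T2 [TU [H1 H2]]]].
  exists (fun p => U p /\ T1 p), (fun p => U p /\ T2 p); split; [|split].
  + move=> p; split; last by case=> -[].
    by move=> Up; case: ((TU p).1 (UT p Up)); [left|right].
  + by apply: IHb H1 => p [].
  + by apply: IHc H2 => p [].
- by case=> H; [left; apply: IHb H|right; apply: IHc H].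
- by case=> [nc|H]; [left|right; apply: IH H; apply: team_int_sub].
Qed.

Lemma sat_co_sub a T U : subteam U T -> sat_co a T -> sat_co a U.
Proof. by move=> UT; rewrite -!sat_form_of_co; apply: sat_sub. Qed.

Lemma sat_co_single a T p : sat_co a T -> T p -> sat_co a (single p).
Proof. by move=> Ha Tp; apply: sat_co_sub Ha => q ->. Qed.

Lemma sat_co_flat a T :
  (forall p, T p -> sat_co a (single p)) -> sat_co a T.
Proof.
elim: a T => [X x|b _|b IHb c IHc|b IHb c IHc|l b IH] T /= H.
- by move=> p Tp; exact: (H p Tp p (erefl p)).
- by move=> p Tp; exact: (H p Tp p (erefl p)).
- by split; [apply: IHb|apply: IHc] => p /H [].
- exists (fun q => T q /\ sat_co b (single q)),
         (fun q => T q /\ sat_co c (single q)); split; [|split].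
  + move=> q; split; last by case=> -[].
    move=> Tq; have [U1 [U2 [U12 [H1 H2]]]] := H q Tq.
    case: ((U12 q).1 (erefl q)) => Uq; [left|right]; split=> //.
    * exact: sat_co_single H1 Uq.
    * exact: sat_co_single H2 Uq.
  + by apply: IHb => q [].
  + by apply: IHc => q [].
- have [cl|] := classic (consistent l); last by left.
  right; apply: IH => q Tq; have [s [F [Ts Eq]]] := Tq.
  case: (H _ Ts) => // Hb; apply: sat_co_single Hb _.
  by exists s, F.
Qed.

Lemma sat_co_union a T T1 T2 :
  team_union T T1 T2 -> sat_co a T1 -> sat_co a T2 -> sat_co a T.
Proof.
move=> TU H1 H2; apply: sat_co_flat => p /(TU p).1 [] Tp.
- exact: sat_co_single H1 Tp.
- exact: sat_co_single H2 Tp.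
Qed.

Lemma not_gentails (D : co S -> Prop) f : ~ gentails D f ->
  exists T, [/\ gteam T, forall a, D a -> sat_co a T & ~ sat f T].
Proof.
move=> /not_all_ex_not [T nT]; exists T.
have [gT nDT] := imply_to_and _ _ nT.
by have [DT nf] := imply_to_and _ _ nDT.
Qed.

End TeamClosure.

Theorem theorem3p8 (S : signature) (D : co S -> Prop) (phi psi : form S) :
  ((inCOt phi /\ inCOt psi) \/ (inCOD phi /\ inCOD psi)) ->
  gentails D (FTor phi psi) -> gentails D phi \/ gentails D psi.
Proof.
move=> _ ent; apply: NNPP => /not_or_and [/not_gentails [T1 [g1 D1 n1]]].
move=> /not_gentails [T2 [g2 D2 n2]].
pose T p := T1 p \/ T2 p.
have TU : team_union T T1 T2 by [].
have gT : gteam T by move=> p [] Tp; [apply: g1|apply: g2].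
have DT a : D a -> sat_co a T.
  by move=> Da; apply: sat_co_union TU (D1 a Da) (D2 a Da).
case: (ent T gT DT) => Hs.
- by apply: n1; apply: sat_sub Hs => p; left.
- by apply: n2; apply: sat_sub Hs => p; right.
Qed.
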